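(* Let $\mu_1,\mu_2>0$ and $0\le p<1$ with $\frac1{\mu_1}+\frac p{\mu_2}=1$, let $b\ge1$, $N\ge2$, $0<\alpha<0.5$, $\lambda=1-N^{-\alpha}$, $w_u=\max\{(1-p)\mu_1,\mu_2\}$, $w_l=\min\{(1-p)\mu_1,\mu_2\}$, $k=\left(1+\frac{w_u b}{w_l}\right)\left(\frac{1+\mu_1+\mu_2}{w_l}+2\mu_1\right)$. Let $$\mathcal S_{ssc_1}=\left\{s:\ s_1\ge \lambda+\left(\tfrac{1+\mu_1+\mu_2}{w_l}-\mu_1\right)\tfrac{\log N}{\sqrt N},\ s_{1,1}\ge \tfrac{\lambda}{\mu_1}-\tfrac{\log N}{\sqrt N},\ s_{1,2}\ge \tfrac{p\lambda}{\mu_2}-\tfrac{\mu_1\log N}{\sqrt N}\right\},$$ where for $s\in\mathbb R^{b\times2}$, $s_i=s_{i,1}+s_{i,2}$. Then for every $s\in\mathcal S_{ssc_1}$, $$\left(\lambda+\frac{\log N}{\sqrt N}-(1-p)\mu_1s_{1,1}-\mu_2s_{1,2}\right)\mathbb I_{\left\{\sum_{i=1}^b s_i>\lambda+\frac{k\log N}{\sqrt N}+\frac1N\right\}}\le 0.$$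
   Context: Here $s=(s_{i,m})_{1\le i\le b,\,m\in\{1,2\}}$ is a system state: $s_{i,m}$ is the fraction of servers (out of $N$) with at least $i$ jobs whose job in service is in phase $m$ of a Coxian-2 service distribution, so $s$ belongs to $\mathcal S^{(N)}=\{s: 1\ge s_{1,m}\ge\cdots\ge s_{b,m}\ge0,\ s_{1,1}+s_{1,2}\le1,\ Ns_{i,m}\in\mathbb N\}$. $\mathbb I$ denotes an indicator. *)

From Stdlib Require Import Reals.
Open Scope R_scope.

(* A state s is a function s i m (i in 1..b, m in {1,2}); only those
   indices are constrained/used. *)

Definition in_state_space (N b : nat) (s : nat -> nat -> R) : Prop :=
  (forall m : nat, (m = 1%nat \/ m = 2%nat) ->
     s 1%nat m <= 1 /\
     (forall i : nat, (1 <= i < b)%nat -> s (S i) m <= s i m) /\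
     0 <= s b m /\
     (forall i : nat, (1 <= i <= b)%nat -> exists n : nat, INR N * s i m = INR n))
  /\ s 1%nat 1%nat + s 1%nat 2%nat <= 1.

Definition s_tot (s : nat -> nat -> R) (i : nat) : R := s i 1%nat + s i 2%nat.

Definition sum_s (b : nat) (s : nat -> nat -> R) : R :=
  sum_f_R0 (fun j => s_tot s (S j)) (pred b).

Definition ind_gt (x y : R) : R := if Rlt_dec y x then 1 else 0.

(* Write s11 and s12 as their lower bounds
   plus excesses x, y >= 0.  Since mu1 mu2 = mu2 + p mu1, the lower bounds
   contribute exactly lam - (mu1 + mu2) eps to (1-p) mu1 s11 + mu2 s12, while
   the bound on s1 forces wl (x + y) >= (1 + mu1 + mu2) eps; as both weights
   are at least wl, the excesses contribute at least (1 + mu1 + mu2) eps. *)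

From Stdlib Require Import Reals Lra Psatz.
Open Scope R_scope.

Lemma ind_gt_nonneg (x y : R) : 0 <= ind_gt x y.
Proof. unfold ind_gt; destruct Rlt_dec; lra. Qed.

Lemma Rmult_nonpos_ind_gt (a x y : R) : a <= 0 -> a * ind_gt x y <= 0.
Proof. intros Ha; pose proof (ind_gt_nonneg x y); nra. Qed.

Lemma ln_div_sqrt_nonneg (x : R) : 1 <= x -> 0 <= ln x / sqrt x.
Proof.
  intros Hx; apply Rmult_le_pos.
  - rewrite <- ln_1; destruct (Req_dec x 1) as [-> | Hx1]; [lra |].
    apply Rlt_le, ln_increasing; lra.
  - apply Rlt_le, Rinv_0_lt_compat, sqrt_lt_R0; lra.
Qed.

Lemma rates_balance (mu1 mu2 p : R) :
  mu1 <> 0 -> mu2 <> 0 -> 1 / mu1 + p / mu2 = 1 -> mu2 + p * mu1 = mu1 * mu2.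
Proof.
  intros H1 H2 Hbal.
  transitivity (mu1 * mu2 * (1 / mu1 + p / mu2)); [field; auto |].
  rewrite Hbal; ring.
Qed.

Section Drift.

Variables (mu1 mu2 p lam eps wl s11 s12 : R).
Hypotheses (Hmu1 : 0 < mu1) (Hmu2 : 0 < mu2) (Hbal : 1 / mu1 + p / mu2 = 1).
Hypotheses (Hwl : 0 < wl) (Hwl1 : wl <= (1 - p) * mu1) (Hwl2 : wl <= mu2).
Hypothesis (Heps : 0 <= eps).
Hypotheses (Hs1 : lam + ((1 + mu1 + mu2) / wl - mu1) * eps <= s11 + s12)
  (Hs11 : lam / mu1 - eps <= s11) (Hs12 : p * lam / mu2 - mu1 * eps <= s12).

Let x := s11 - (lam / mu1 - eps).
Let y := s12 - (p * lam / mu2 - mu1 * eps).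

Lemma drift_decomposition :
  (1 - p) * mu1 * s11 + mu2 * s12
  = (1 - p) * mu1 * x + mu2 * y + lam - (mu1 + mu2) * eps.
Proof.
  pose proof (rates_balance mu1 mu2 p
    (Rgt_not_eq _ _ Hmu1) (Rgt_not_eq _ _ Hmu2) Hbal) as Hrates.
  replace (mu1 + mu2) with ((1 - p) * mu1 + (mu2 + p * mu1)) by ring.
  rewrite Hrates; unfold x, y; field; lra.
Qed.

Lemma excess_sum_lower_bound : (1 + mu1 + mu2) * eps <= wl * (x + y).
Proof.
  assert (Hlam : lam / mu1 + p * lam / mu2 = lam).
  { transitivity (lam * (1 / mu1 + p / mu2)); [field; lra |].
    rewrite Hbal; ring. }
  assert (Hxy : (1 + mu1 + mu2) / wl * eps <= x + y) by (unfold x, y; lra).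
  replace ((1 + mu1 + mu2) * eps)
    with (wl * ((1 + mu1 + mu2) / wl * eps)) by (field; lra).
  apply Rmult_le_compat_l; lra.
Qed.

Lemma drift_nonpos : lam + eps - (1 - p) * mu1 * s11 - mu2 * s12 <= 0.
Proof.
  assert (Hx : 0 <= x) by (unfold x; lra).
  assert (Hy : 0 <= y) by (unfold y; lra).
  assert (Hweighted : wl * (x + y) <= (1 - p) * mu1 * x + mu2 * y) by nra.
  pose proof drift_decomposition as Hdecomp.
  pose proof excess_sum_lower_bound as Hexcess.
  lra.
Qed.

End Drift.

Theorem lemma4 (mu1 mu2 p alpha : R) (b N : nat) (s : nat -> nat -> R) :
  0 < mu1 -> 0 < mu2 -> 0 <= p -> p < 1 ->
  1 / mu1 + p / mu2 = 1 ->
  (1 <= b)%nat -> (2 <= N)%nat ->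
  0 < alpha -> alpha < 1 / 2 ->
  let lam := 1 - Rpower (INR N) (- alpha) in
  let wu := Rmax ((1 - p) * mu1) mu2 in
  let wl := Rmin ((1 - p) * mu1) mu2 in
  let k := (1 + wu * INR b / wl) * ((1 + mu1 + mu2) / wl + 2 * mu1) in
  let eps := ln (INR N) / sqrt (INR N) in
  in_state_space N b s ->
  s_tot s 1%nat >= lam + ((1 + mu1 + mu2) / wl - mu1) * eps ->
  s 1%nat 1%nat >= lam / mu1 - eps ->
  s 1%nat 2%nat >= p * lam / mu2 - mu1 * eps ->
  (lam + eps - (1 - p) * mu1 * s 1%nat 1%nat - mu2 * s 1%nat 2%nat)
    * ind_gt (sum_s b s) (lam + k * eps + 1 / INR N) <= 0.
Proof.
  intros Hmu1 Hmu2 _ Hp Hbal _ HN _ _ lam wu wl k eps _ Hs1 Hs11 Hs12.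
  apply Rmult_nonpos_ind_gt.
  apply (drift_nonpos mu1 mu2 p lam eps wl); try lra.
  - apply Rmin_glb_lt; [apply Rmult_lt_0_compat |]; lra.
  - apply Rmin_l.
  - apply Rmin_r.
  - apply ln_div_sqrt_nonneg, (le_INR 1); lia.
  - unfold s_tot in Hs1; lra.
Qed.
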